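(* Let $T:\mathbb{Z}_{\ge 0}\to\mathbb{R}$ satisfy $T(mn) = T(m)T(n) + T(m-1)T(n-1)$ for all integers $m,n\ge 1$. If $T(0)\neq 0$, then $T(n)=\tfrac12$ for all $n\ge 0$. *)

From Stdlib Require Import Reals.

(** Taking [n = 1] gives [T(m) (1 - T(1)) = T(0) T(m-1)], and [T(0) <> 0] forces
    [T(1) <> 1]; hence [T(n) = a r^n] with [a = T(0)], [r = a / (1 - T(1))].
    The case [m = n = 1] turns into [r = a r^2 + a], and the case [m = n = 2]
    into [r^4 = a r^4 + a r^2 = r^3].  As [r <> 0], this gives [r = 1], and then
    [a = 1/2]. *)

From Stdlib Require Import Reals.
From Stdlib Require Import Lra Lia Psatz.
Open Scope R_scope.

Section ProductRecursion.

Variable T : nat -> R.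

Hypothesis hT : forall m n : nat, (1 <= m)%nat -> (1 <= n)%nat ->
  T (m * n)%nat = T m * T n + T (m - 1)%nat * T (n - 1)%nat.

Hypothesis h0 : T 0%nat <> 0.

Lemma T_succ_mul_one_sub_T1 (m : nat) : T (S m) * (1 - T 1%nat) = T 0%nat * T m.
Proof.
  pose proof (hT (S m) 1 ltac:(lia) ltac:(lia)) as H.
  rewrite Nat.mul_1_r, Nat.sub_succ, Nat.sub_0_r, Nat.sub_diag in H.
  lra.
Qed.

Lemma one_sub_T1_neq0 : 1 - T 1%nat <> 0.
Proof.
  intro E.
  pose proof (T_succ_mul_one_sub_T1 0) as H.
  rewrite E, Rmult_0_r in H.
  apply h0; nra.
Qed.

Definition ratio : R := T 0%nat / (1 - T 1%nat).

Lemma T_geometric (n : nat) : T n = T 0%nat * ratio ^ n.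
Proof.
  induction n as [|n IH]; [simpl; ring|].
  assert (Hstep : T (S n) = ratio * T n).
  { apply (Rmult_eq_reg_r (1 - T 1%nat)); [|exact one_sub_T1_neq0].
    rewrite T_succ_mul_one_sub_T1.
    unfold ratio; field; exact one_sub_T1_neq0. }
  rewrite Hstep, IH; simpl; ring.
Qed.

Lemma ratio_fixed_point : ratio = T 0%nat * ratio ^ 2 + T 0%nat.
Proof.
  pose proof (hT 1 1 ltac:(lia) ltac:(lia)) as H; simpl in H.
  assert (H1 : T 1%nat = T 0%nat * ratio) by (rewrite (T_geometric 1); ring).
  apply (Rmult_eq_reg_l (T 0%nat)); [|exact h0].
  rewrite <- H1. rewrite H at 1. rewrite H1; ring.
Qed.

Lemma ratio_neq0 : ratio <> 0.
Proof.
  intro Z. pose proof ratio_fixed_point as E.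
  rewrite Z in E. apply h0. simpl in E. lra.
Qed.

Lemma ratio_pow4 : ratio ^ 4 = ratio ^ 3.
Proof.
  pose proof (hT 2 2 ltac:(lia) ltac:(lia)) as H; simpl in H.
  rewrite (T_geometric 4), (T_geometric 2), (T_geometric 1) in H.
  assert (H4 : ratio ^ 4 = T 0%nat * ratio ^ 4 + T 0%nat * ratio ^ 2).
  { apply (Rmult_eq_reg_l (T 0%nat)); [|exact h0]. rewrite H at 1; ring. }
  rewrite H4.
  replace (T 0%nat * ratio ^ 4 + T 0%nat * ratio ^ 2)
    with (ratio ^ 2 * (T 0%nat * ratio ^ 2 + T 0%nat)) by ring.
  rewrite <- ratio_fixed_point; ring.
Qed.

Lemma ratio_eq1 : ratio = 1.
Proof.
  assert (H : ratio ^ 3 * (ratio - 1) = 0).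
  { replace (ratio ^ 3 * (ratio - 1)) with (ratio ^ 4 - ratio ^ 3) by ring.
    rewrite ratio_pow4; ring. }
  apply Rmult_integral in H as [H|H]; [|lra].
  exfalso. exact (pow_nonzero _ 3 ratio_neq0 H).
Qed.

End ProductRecursion.

Theorem lemma8 (T : nat -> R)
  (hT : forall m n : nat, (1 <= m)%nat -> (1 <= n)%nat ->
          T (m * n)%nat = T m * T n + T (m - 1)%nat * T (n - 1)%nat)
  (h0 : T 0%nat <> 0) :
  forall n : nat, T n = 1 / 2.
Proof.
  intro n.
  pose proof (ratio_fixed_point T hT h0) as E.
  rewrite (ratio_eq1 T hT h0) in E.
  rewrite (T_geometric T hT h0 n), (ratio_eq1 T hT h0), pow1.
  lra.
Qed.
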